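(* Let $G$ be a group with the unique root property. Suppose that for infinitely many primes $p$ there exists a subgroup $H$ of index $p$ in $G$ which is isomorphic to $G$. Then the abstract commensurator $\mathrm{Comm}(G)$ is not finitely generated.
   Context: A group $G$ has the unique root property if for all $x,y\in G$ and every positive integer $n$, $x^n=y^n$ implies $x=y$. The abstract commensurator $\mathrm{Comm}(G)$ is the group of equivalence classes of isomorphisms between finite-index subgroups of $G$, two such isomorphisms being equivalent if they agree on some finite-index subgroup of $G$ on which both are defined; the product of $\alpha:G_1\to G_1'$ and $\beta:G_2\to G_2'$ is $\alpha\beta:\alpha^{-1}(G_1'\cap G_2)\to\beta(G_1'\cap G_2)$. *)

From mathcomp Require Import all_boot.
Set Implicit Arguments. Unset Strict Implicit. Unset Printing Implicit Defensive.

Record group := Group {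
  carrier :> Type;
  gmul : carrier -> carrier -> carrier;
  ginv : carrier -> carrier;
  gone : carrier;
  gmulA : forall x y z, gmul x (gmul y z) = gmul (gmul x y) z;
  gmul1 : forall x, gmul gone x = x;
  gmulV : forall x, gmul (ginv x) x = gone
}.

Section Defs.
Variable G : group.

Fixpoint gpow (x : G) (n : nat) : G :=
  match n with 0 => gone G | n'.+1 => gmul x (gpow x n') end.

Definition unique_root : Prop :=
  forall (x y : G) (n : nat), 0 < n -> gpow x n = gpow y n -> x = y.

Definition subgroup (H : G -> Prop) : Prop :=
  H (gone G) /\ (forall x y, H x -> H y -> H (gmul x y)) /\
  (forall x, H x -> H (ginv x)).

Definition index_eq (H : G -> Prop) (n : nat) : Prop :=
  exists r : nat -> G,
    (forall x : G, exists i, i < n /\ H (gmul (ginv (r i)) x)) /\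
    (forall i j, i < n -> j < n -> H (gmul (ginv (r i)) (r j)) -> i = j).

Definition finite_index (H : G -> Prop) : Prop :=
  subgroup H /\ exists n, index_eq H n.

Definition iso_to_sub (H : G -> Prop) : Prop :=
  exists f : G -> G,
    (forall x y, f (gmul x y) = gmul (f x) (f y)) /\
    (forall x y, f x = f y -> x = y) /\
    (forall x, H (f x)) /\
    (forall y, H y -> exists x, f x = y).

(* Raw data of a partial map: domain, codomain, and the map (meaningful on
   the domain only). *)
Record pmap := PMap { pdom : G -> Prop; pcod : G -> Prop; pfun : G -> G }.

Definition commensuration (a : pmap) : Prop :=
  finite_index (pdom a) /\ finite_index (pcod a) /\
  (forall x y, pdom a x -> pdom a y ->
     pfun a (gmul x y) = gmul (pfun a x) (pfun a y)) /\
  (forall x y, pdom a x -> pdom a y -> pfun a x = pfun a y -> x = y) /\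
  (forall x, pdom a x -> pcod a (pfun a x)) /\
  (forall y, pcod a y -> exists x, pdom a x /\ pfun a x = y).

(* A set S of commensurations is closed when its image in Comm(G) is a
   subgroup and it is a union of equivalence classes.  The classes are
   expressed relationally:
   - c represents the identity class if c agrees with id on a finite-index
     subgroup K contained in dom c;
   - c represents the product ab (a first, then b; defined on
     a^{-1}(cod a ∩ dom b)) if c x = b (a x) on a finite-index subgroup K
     with K ⊆ dom c, K ⊆ dom a, a(K) ⊆ dom b;
   - c represents a^{-1} if c (a x) = x on a finite-index K ⊆ dom a with
     a(K) ⊆ dom c (i.e. the product a c is the identity class). *)
Definition comm_closed (S : pmap -> Prop) : Prop :=
  (forall c, commensuration c ->
     (exists K, finite_index K /\ (forall x, K x -> pdom c x) /\
        (forall x, K x -> pfun c x = x)) -> S c) /\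
  (forall a b c, commensuration a -> commensuration b -> commensuration c ->
     S a -> S b ->
     (exists K, finite_index K /\
        (forall x, K x -> pdom c x /\ pdom a x /\ pdom b (pfun a x)) /\
        (forall x, K x -> pfun c x = pfun b (pfun a x))) -> S c) /\
  (forall a c, commensuration a -> commensuration c -> S a ->
     (exists K, finite_index K /\
        (forall x, K x -> pdom a x /\ pdom c (pfun a x)) /\
        (forall x, K x -> pfun c (pfun a x) = x)) -> S c).

Definition comm_generated (n : nat) (gens : nat -> pmap) (c : pmap) : Prop :=
  forall S, comm_closed S -> (forall i, i < n -> S (gens i)) -> S c.

Definition comm_fin_gen : Prop :=
  exists (n : nat) (gens : nat -> pmap),
    (forall i, i < n -> commensuration (gens i)) /\
    (forall c, commensuration c -> comm_generated n gens c).

End Defs.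

(** The index character: a commensuration c maps a finite-index subgroup K of
    its domain onto c(K), and [G : K] [G : cod c] = [G : c(K)] [G : dom c].
    Hence, for each prime q, the commensurations whose domain and codomain
    have indices of equal q-adic valuation form a union of classes that is a
    subgroup of Comm(G).  Finitely many generators have indices bounded by
    some P, so they all lie in this subgroup for every prime q > P; but an
    isomorphism from G onto a subgroup of prime index q > P does not. *)
From Pilot Require Import Defs.
From mathcomp Require Import all_boot zify.
From Stdlib Require Import Classical.
Set Implicit Arguments. Unset Strict Implicit. Unset Printing Implicit Defensive.

Lemma logn_small q m : 0 < m -> m < q -> logn q m = 0.
Proof. by move=> m_gt0 mq; rewrite lognE m_gt0 gtnNdvd // !andbF. Qed.

Section GroupIndex.
Variable G : group.
Local Notation mul := (@gmul G).
Local Notation inv := (@ginv G).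
Local Notation one := (@gone G).

Lemma mulKg (x y : G) : mul (inv x) (mul x y) = y.
Proof. by rewrite gmulA gmulV gmul1. Qed.

Lemma mulgV (x : G) : mul x (inv x) = one.
Proof.
have h : mul (inv x) (mul x (inv x)) = inv x by rewrite gmulA gmulV gmul1.
by rewrite -[mul x (inv x)](mulKg (inv x)) h gmulV.
Qed.

Lemma mulg1 (x : G) : mul x one = x.
Proof. by rewrite -(gmulV x) gmulA mulgV gmul1. Qed.

Lemma mulVKg (x y : G) : mul x (mul (inv x) y) = y.
Proof. by rewrite gmulA mulgV gmul1. Qed.

Lemma mulgI (x y z : G) : mul x y = mul x z -> y = z.
Proof. by move=> h; rewrite -(mulKg x y) h mulKg. Qed.

Lemma invg_unique (u v : G) : mul u v = one -> u = inv v.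
Proof. by move=> h; rewrite -[u]mulg1 -(mulgV v) gmulA h gmul1. Qed.

Lemma invgK (x : G) : inv (inv x) = x.
Proof. by symmetry; apply: invg_unique; apply: mulgV. Qed.

Lemma invMg (x y : G) : inv (mul x y) = mul (inv y) (inv x).
Proof. by symmetry; apply: invg_unique; rewrite -gmulA mulKg gmulV. Qed.

Section Cosets.
Variables (K : G -> Prop) (sK : subgroup K).

Lemma coset_sym (a b : G) : K (mul (inv a) b) -> K (mul (inv b) a).
Proof. by case: sK => _ [_ KV] /KV; rewrite invMg invgK. Qed.

Lemma coset_trans (a b c : G) :
  K (mul (inv a) b) -> K (mul (inv b) c) -> K (mul (inv a) c).
Proof. by case: sK => _ [KM _] h1 h2; have := KM _ _ h1 h2; rewrite -gmulA mulVKg. Qed.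

End Cosets.

Definition index_in (A K : G -> Prop) (n : nat) : Prop :=
  exists r : nat -> G, (forall i, i < n -> A (r i)) /\
    (forall x, A x -> exists i, i < n /\ K (mul (inv (r i)) x)) /\
    (forall i j, i < n -> j < n -> K (mul (inv (r i)) (r j)) -> i = j).

Definition full : G -> Prop := fun _ => True.

Lemma index_eq_in (K : G -> Prop) n : index_eq K n <-> index_in full K n.
Proof.
split=> [[r [rc rd]] | [r [_ [rc rd]]]]; exists r; last by split=> // x; apply: rc.
by split=> //; split=> // x _; apply: rc.
Qed.

Lemma index_in_ext (A B K : G -> Prop) n :
  (forall x, A x <-> B x) -> index_in A K n -> index_in B K n.
Proof.
move=> AB [r [rA [rc rd]]]; exists r; split=> [i /rA /AB //|]; split=> //.
by move=> x /AB; apply: rc.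
Qed.

Lemma index_eq_ext (K L : G -> Prop) n :
  (forall x, K x <-> L x) -> index_eq K n -> index_eq L n.
Proof.
move=> KL [r [rc rd]]; exists r; split.
- by move=> x; have [i [hi /KL hK]] := rc x; exists i.
- by move=> i j hi hj /KL; apply: rd.
Qed.

Lemma index_in_le (A K : G -> Prop) m n :
  subgroup K -> index_in A K m -> index_in A K n -> m <= n.
Proof.
move=> sK [r [rA [_ rd]]] [s [_ [sc _]]].
have /fin_all_exists [f hf] : forall i : 'I_m, exists j : 'I_n,
    K (mul (inv (s j)) (r i)).
  by move=> i; have [j [jn hj]] := sc _ (rA _ (ltn_ord i)); exists (Ordinal jn).
have injf : injective f.
  move=> i i' e; apply: val_inj; apply: rd; try exact: ltn_ord.
  by apply: (coset_trans sK (coset_sym sK (hf i))); rewrite e.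
by have := leq_card f injf; rewrite !card_ord.
Qed.

Lemma index_in_unique (A K : G -> Prop) m n :
  subgroup K -> index_in A K m -> index_in A K n -> m = n.
Proof.
by move=> sK h1 h2; apply/eqP; rewrite eqn_leq (index_in_le sK h1 h2) (index_in_le sK h2 h1).
Qed.

Lemma index_eq_unique (K : G -> Prop) m n :
  subgroup K -> index_eq K m -> index_eq K n -> m = n.
Proof. by move=> sK /index_eq_in h1 /index_eq_in; apply: index_in_unique. Qed.

Lemma index_eq_gt0 (K : G -> Prop) n : index_eq K n -> 0 < n.
Proof. by move=> [r [rc _]]; have [i [hi _]] := rc one; case: n rc hi. Qed.

Lemma index_eq_full : index_eq full 1.
Proof. by exists (fun _ => one); split=> [x|[|?] [|?]] //; exists 0. Qed.

(* Tower law [G : K] = [G : B] [B : K]: the coset of K containing x is labelled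
   by i * s + j, where x lies in g_i B and g_i^-1 x in a_j K. *)
Lemma index_in_mul (B K : G -> Prop) t s :
  subgroup B -> (forall x, K x -> B x) ->
  index_in full B t -> index_in B K s -> index_in full K (t * s).
Proof.
move=> [_ [BM BV]] KB [g [_ [gc gd]]] [a [aB [ac ad]]].
exists (fun k => mul (g (k %/ s)) (a (k %% s))); split=> //; split.
- move=> x _; have [i [hi hB]] := gc x I; have [j [hj hK]] := ac _ hB.
  have s_gt0 : 0 < s by apply: leq_ltn_trans hj.
  exists (i * s + j); split; first by rewrite -ltn_divLR // divnMDl // divn_small // addn0.
  by rewrite divnMDl // divn_small // addn0 modnMDl modn_small // invMg -gmulA.
- move=> k l hk hl hK.
  have s_gt0 : 0 < s by case: (posnP s) hk => [->|//]; rewrite muln0.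
  move: hK (KB _ hK); rewrite invMg -!gmulA.
  set u := a (k %% s); set v := a (l %% s); set gk := g (k %/ s); set gl := g (l %/ s).
  move=> hK hB.
  have uB : B u by apply/aB/ltn_pmod.
  have vB : B v by apply/aB/ltn_pmod.
  have ekl : k %/ s = l %/ s.
    apply: gd; rewrite ?ltn_divLR //.
    by have := BM _ _ (BM _ _ uB hB) (BV _ vB); rewrite mulVKg -!gmulA mulgV mulg1.
  have hK' : K (mul (inv u) v) by move: hK; rewrite /gk /gl ekl mulKg.
  have mkl : k %% s = l %% s by apply: ad; rewrite ?ltn_pmod.
  by rewrite (divn_eq k s) (divn_eq l s) ekl mkl.
Qed.

Lemma index_in_cons (X Y K : G -> Prop) s y : subgroup K ->
  index_in X K s -> Y y -> (forall x, X x -> Y x) ->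
  (forall x, Y x -> X x \/ K (mul (inv y) x)) ->
  (forall x, X x -> ~ K (mul (inv x) y)) -> index_in Y K s.+1.
Proof.
move=> sK [r [rX [rc rd]]] Yy XY YXy Xy.
exists (fun j => if j == s then y else r j); split; [|split].
- by move=> j; case: eqP => // ne hj; apply/XY/rX; lia.
- move=> x /YXy [/rc [i [hi hK]] | hK].
  + by exists i; rewrite (ltn_eqF hi); split=> //; apply: ltnW.
  + by exists s; rewrite eqxx.
- move=> j j'; case: eqP => [->|nj]; case: eqP => [->|nj'] // hj hj' hK.
  + by case: (Xy (r j') (rX _ _) (coset_sym sK hK)); lia.
  + by case: (Xy (r j) (rX _ _) hK); lia.
  + by apply: rd => //; lia.
Qed.

(* B meets only finitely many cosets r_i K; one representative of each is
   collected by induction on i. *)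
Lemma index_in_restrict (B K : G -> Prop) n :
  subgroup K -> index_in full K n -> exists s, index_in B K s.
Proof.
move=> sK [r [_ [rc rd]]].
pose X m x := B x /\ exists i, i < m /\ K (mul (inv (r i)) x).
suff [s hs] : exists s, index_in (X n) K s.
  exists s; apply: index_in_ext hs => x.
  by split=> [[] //|Bx]; split=> //; apply: rc.
have : forall m, m <= n -> exists s, index_in (X m) K s; last by apply.
elim=> [|m IH] hm.
  by exists 0, (fun _ => one); split=> //; split=> // x [_ [i []]].
have [s hs] := IH (ltnW hm).
have Xm_sub : forall x, X m x -> X m.+1 x.
  by move=> x [Bx [i [hi hK]]]; split=> //; exists i; split=> //; apply: ltnW.
have Xm_last : forall x, X m.+1 x -> X m x \/ K (mul (inv (r m)) x).
  move=> x [Bx [i [hi hK]]]; move: hi; rewrite ltnS leq_eqVlt => /orP[/eqP ei|hi].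
    by right; rewrite -ei.
  by left; split=> //; exists i.
case: (classic (exists y, B y /\ K (mul (inv (r m)) y))) => [[y [By yK]]|none].
- exists s.+1; apply: (index_in_cons (y := y) sK hs) => //.
  + by split=> //; exists m.
  + by move=> x /Xm_last [|/(coset_trans sK (coset_sym sK yK))]; [left|right].
  + move=> x [_ [i [hi hK]]] hxy.
    have ei := rd _ _ (ltn_trans hi hm) hm
      (coset_trans sK hK (coset_trans sK hxy (coset_sym sK yK))).
    by rewrite ei ltnn in hi.
- exists s; apply: index_in_ext hs => x; split=> [/Xm_sub //|hx].
  case: (Xm_last _ hx) => // hK.
  by case: none; exists x; split=> //; case: hx.
Qed.

Definition img (f : G -> G) (K : G -> Prop) : G -> Prop :=
  fun y => exists x, K x /\ f x = y.

Section Isomorphism.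
Variables (A B : G -> Prop) (f : G -> G).
Hypotheses (sA : subgroup A)
  (fM : forall x y, A x -> A y -> f (mul x y) = mul (f x) (f y))
  (fI : forall x y, A x -> A y -> f x = f y -> x = y)
  (fAB : forall x, A x -> B (f x))
  (fS : forall y, B y -> exists x, A x /\ f x = y).

Lemma morph1 : f one = one.
Proof.
case: sA => A1 _; apply: (@mulgI (f one)).
by rewrite mulg1 -fM // gmul1.
Qed.

Lemma morphV x : A x -> f (inv x) = inv (f x).
Proof.
case: sA => _ [_ AV] Ax; apply: invg_unique.
by rewrite -fM ?gmulV ?morph1 //; apply: AV.
Qed.

Lemma subgroup_img K : subgroup K -> (forall x, K x -> A x) -> subgroup (img f K).
Proof.
move=> [K1 [KM KV]] KA; split; [|split].
- by exists one; rewrite morph1.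
- move=> _ _ [x [Kx <-]] [y [Ky <-]]; exists (mul x y).
  by split; [apply: KM | rewrite fM; auto].
- move=> _ [x [Kx <-]]; exists (inv x).
  by split; [apply: KV | rewrite morphV; auto].
Qed.

Lemma index_in_img K s :
  (forall x, K x -> A x) -> index_in A K s -> index_in B (img f K) s.
Proof.
case: sA => _ [AM AV] KA [a [aA [ac ad]]].
exists (fun j => f (a j)); split; [|split].
- by move=> j /aA /fAB.
- move=> y /fS [x [Ax <-]]; have [j [hj hK]] := ac _ Ax.
  exists j; split=> //; exists (mul (inv (a j)) x); split=> //.
  by rewrite fM ?morphV //; auto.
- move=> j j' hj hj' [z [Kz e]]; apply: ad => //.
  suff -> : mul (inv (a j)) (a j') = z by [].
  by apply: fI; auto; rewrite fM ?morphV ?e //; auto.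
Qed.

End Isomorphism.

Section Commensuration.
Variables (c : Defs.pmap G) (cC : commensuration c).
Variables (K : G -> Prop) (sK : subgroup K) (K_dom : forall x, K x -> pdom c x).

Lemma finite_index_img k : index_eq K k -> finite_index (img (pfun c) K).
Proof.
case: cC => [[sA _] [[sB [n hn]] [cM [cI [cAB cS]]]]] /index_eq_in hk.
have [s hs] := index_in_restrict (pdom c) sK hk.
have img_cod : forall y, img (pfun c) K y -> pcod c y by move=> _ [x [/K_dom/cAB ? <-]].
split; first exact: (subgroup_img sA cM sK K_dom).
exists (n * s); apply/index_eq_in/(index_in_mul sB img_cod (proj1 (index_eq_in _ _) hn)).
exact: (index_in_img sA cM cI cAB cS K_dom hs).
Qed.

Lemma index_img_mul k k' m n :
  index_eq K k -> index_eq (img (pfun c) K) k' ->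
  index_eq (pdom c) m -> index_eq (pcod c) n -> k * n = k' * m.
Proof.
case: cC => [[sA _] [[sB _] [cM [cI [cAB cS]]]]] /index_eq_in hk hk'
  /index_eq_in hm /index_eq_in hn.
have [s hs] := index_in_restrict (pdom c) sK hk.
have img_cod : forall y, img (pfun c) K y -> pcod c y by move=> _ [x [/K_dom/cAB ? <-]].
have sI := subgroup_img sA cM sK K_dom.
rewrite (index_in_unique sK hk (index_in_mul sA K_dom hm hs)).
rewrite (index_in_unique sI (proj1 (index_eq_in _ _) hk')
  (index_in_mul sB img_cod hn (index_in_img sA cM cI cAB cS K_dom hs))).
by rewrite [LHS]mulnAC [RHS]mulnAC [n * m]mulnC.
Qed.

End Commensuration.

(* The commensurations in the kernel of the q-part of the index character. *)
Definition logn_balanced (q : nat) (c : Defs.pmap G) : Prop :=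
  forall m n, index_eq (pdom c) m -> index_eq (pcod c) n -> logn q m = logn q n.

Lemma logn_balancedE q c K k k' :
  commensuration c -> subgroup K -> (forall x, K x -> pdom c x) ->
  index_eq K k -> index_eq (img (pfun c) K) k' ->
  logn_balanced q c <-> logn q k = logn q k'.
Proof.
move=> cC sK K_dom hk hk'.
have [[sA [m hm]] [[sB [n hn]] _]] := cC.
have := index_img_mul cC sK K_dom hk hk' hm hn.
move/(congr1 (logn q)); rewrite !lognM ?(index_eq_gt0 hk) ?(index_eq_gt0 hk')
  ?(index_eq_gt0 hm) ?(index_eq_gt0 hn) // => e.
split=> [/(_ _ _ hm hn)|e' m' n' hm' hn']; first by lia.
by rewrite -(index_eq_unique sA hm hm') -(index_eq_unique sB hn hn'); lia.
Qed.

Lemma comm_closed_logn_balanced q : comm_closed (logn_balanced q).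
Proof.
split; [|split].
- move=> c cC [K [[sK [k hk]] [K_dom Kid]]].
  have hk' : index_eq (img (pfun c) K) k.
    apply: index_eq_ext hk => y; split=> [Ky|[x [Kx <-]]]; last by rewrite Kid.
    by exists y; rewrite Kid.
  by apply/(logn_balancedE q cC sK K_dom hk hk').
- move=> a b c aC bC cC Ba Bb [K [[sK [k hk]] [K_dom Kc]]].
  have Ka : forall x, K x -> pdom a x by move=> x /K_dom [_ []].
  have [sKa [ka hka]] := finite_index_img aC sK Ka hk.
  have Kab : forall y, img (pfun a) K y -> pdom b y by move=> _ [x [/K_dom [_ [_]] ? <-]].
  have [_ [kb hkb]] := finite_index_img bC sKa Kab hka.
  have hkc : index_eq (img (pfun c) K) kb.
    apply: index_eq_ext hkb => y; split.
    + by move=> [_ [[x [Kx <-]] <-]]; exists x; rewrite Kc.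
    + by move=> [x [Kx <-]]; exists (pfun a x); split; [exists x | rewrite Kc].
  apply/(logn_balancedE q cC sK (fun x Kx => proj1 (K_dom x Kx)) hk hkc).
  move/(logn_balancedE q aC sK Ka hk hka): Ba ->.
  exact/(logn_balancedE q bC sKa Kab hka hkb).
- move=> a c aC cC Ba [K [[sK [k hk]] [K_dom Kc]]].
  have Ka : forall x, K x -> pdom a x by move=> x /K_dom [].
  have [sKa [ka hka]] := finite_index_img aC sK Ka hk.
  have Kac : forall y, img (pfun a) K y -> pdom c y by move=> _ [x [/K_dom [_ ?] <-]].
  have hkc : index_eq (img (pfun c) (img (pfun a) K)) k.
    apply: index_eq_ext hk => y; split=> [Ky|[_ [[x [Kx <-]] <-]]]; last by rewrite Kc.
    by exists (pfun a y); split; [exists y | rewrite Kc].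
  apply/(logn_balancedE q cC sKa Kac hka hkc).
  by move/(logn_balancedE q aC sK Ka hk hka): Ba ->.
Qed.

Lemma commensurations_index_bounded n (gens : nat -> Defs.pmap G) :
  (forall i, i < n -> commensuration (gens i)) ->
  exists P, forall i m, i < n ->
    index_eq (pdom (gens i)) m \/ index_eq (pcod (gens i)) m -> m < P.
Proof.
elim: n => [|n IH] gC; first by exists 0.
have [P hP] := IH (fun i hi => gC i (ltnW hi)).
have [[sD [m0 hm0]] [[sC [n0 hn0]] _]] := gC n (ltnSn n).
exists (maxn P (maxn m0 n0)).+1 => i m; rewrite ltnS leq_eqVlt => /orP [/eqP ->|hi].
- by case=> [/(index_eq_unique sD hm0)|/(index_eq_unique sC hn0)] <-; lia.
- by move/(hP _ _ hi); lia.
Qed.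

Lemma logn_balanced_small_index q c :
  (forall m, index_eq (pdom c) m \/ index_eq (pcod c) m -> m < q) ->
  logn_balanced q c.
Proof.
move=> hq m n hm hn.
by rewrite !logn_small ?(index_eq_gt0 hm) ?(index_eq_gt0 hn) ?hq //; [right|left].
Qed.

Lemma commensuration_iso_to_sub H p : subgroup H -> index_eq H p ->
  forall f : G -> G, (forall x y, f (mul x y) = mul (f x) (f y)) ->
  (forall x y, f x = f y -> x = y) -> (forall x, H (f x)) ->
  (forall y, H y -> exists x, f x = y) -> commensuration (PMap full H f).
Proof.
move=> sH hp f fM fI fH fS.
split; [|split; [|split; [|split; [|split]]]] => //=.
- by split; [split; [|split] | exists 1; apply: index_eq_full].
- by split=> //; exists p.
- by move=> x y _ _; apply: fI.
- by move=> y /fS [x e]; exists x.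
Qed.

End GroupIndex.

(* The unique root property is not needed: the index character alone already
   prevents finite generation. *)
Theorem proposition2p8 (G : group) :
  unique_root G ->
  (forall N : nat, exists p : nat, N <= p /\ prime p /\
     exists H : G -> Prop, subgroup H /\ index_eq H p /\ iso_to_sub H) ->
  ~ comm_fin_gen G.
Proof.
move=> _ primes_iso [n [gens [gC gen]]].
have [P hP] := commensurations_index_bounded gC.
have [p [Pp [p_pr [H [sH [hp [f [fM [fI [fH fS]]]]]]]]]] := primes_iso P.
have cC := commensuration_iso_to_sub sH hp fM fI fH fS.
have gens_balanced : forall i, i < n -> logn_balanced p (gens i).
  by move=> i hi; apply: logn_balanced_small_index => m /(hP _ _ hi) /leq_trans; apply.
have := gen _ cC _ (comm_closed_logn_balanced G p) gens_balanced 1 p (index_eq_full G) hp.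
by rewrite logn1 logn_prime // eqxx.
Qed.
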